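(* Let $n\ge3$. Suppose $\mathcal{CB}$ is a set of $\binom{n-1}{2}$ three-cycle graphs in $\mathbb G^n_A$, each of weight $1$, such that each member of $\mathcal{CB}$ contains an arc (unordered pair of vertices) that belongs to no other member of $\mathcal{CB}$. Then $\mathcal{CB}$ is a basis of $\mathbb C^n_A$, the orthogonal complement of $\mathbb{ST}^n_A$ in $\mathbb G^n_A$.
   Context: $\mathbb G^n_A$ is the space of complete weighted directed graphs without loops on vertices $V_1,\dots,V_n$ where arc $V_i\to V_j$ has weight $d_{i,j}$ with $d_{j,i}=-d_{i,j}$, identified with $\mathbb R^{\binom n2}$ via the entries $d_{i,j}$, $i<j$, with the standard inner product. $\mathbb{ST}^n_A$ is the $(n-1)$-dimensional subspace of strongly transitive graphs, i.e. those with $d_{i,j}+d_{j,k}=d_{i,k}$ for all distinct $i,j,k$. A three-cycle of weight $x$ on distinct vertices $V_a,V_b,V_c$ is the graph with $d_{a,b}=d_{b,c}=d_{c,a}=x$ (hence $d_{b,a}=d_{c,b}=d_{a,c}=-x$) and all other weights zero. *)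

From HB Require Import structures.
From mathcomp Require Import all_boot all_order all_algebra.
Set Implicit Arguments. Unset Strict Implicit. Unset Printing Implicit Defensive.
Import Order.TTheory GRing.Theory Num.Theory.
Local Open Scope ring_scope.

Definition Pairs (n : nat) := {p : 'I_n * 'I_n | (p.1 < p.2)%N}.

(* G^n_A, identified with R^{binom n 2} via the entries d_{i,j}, i < j. *)
(* R^o: R seen as a vector space over itself, so that the library's
   finite-dimensional vector space structure (vectType R) applies. *)
Notation Graph R n := {ffun Pairs n -> R^o}.

(* The weight d_{i,j} of the arc V_i -> V_j (antisymmetric; 0 on the diagonal). *)
Definition wt (R : realFieldType) (n : nat) (g : Graph R n) (i j : 'I_n) : R :=
  match @insub _ (fun p : 'I_n * 'I_n => (p.1 < p.2)%N) (Pairs n) (i, j) with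
  | Some p => g p
  | None =>
    match @insub _ (fun p : 'I_n * 'I_n => (p.1 < p.2)%N) (Pairs n) (j, i) with
    | Some p => - g p
    | None => 0
    end
  end.

Definition inner (R : realFieldType) (n : nat) (g h : Graph R n) : R :=
  \sum_(p : Pairs n) g p * h p.

Definition strongly_transitive (R : realFieldType) (n : nat) (g : Graph R n) : Prop :=
  forall i j k : 'I_n, i != j -> j != k -> i != k ->
    wt g i j + wt g j k = wt g i k.

Definition in_C (R : realFieldType) (n : nat) (g : Graph R n) : Prop :=
  forall s : Graph R n, strongly_transitive s -> inner g s = 0.

Definition three_cycle (R : realFieldType) (n : nat) (a b c : 'I_n) (x : R)
  : Graph R n :=
  [ffun p : Pairs n =>
     let i := (val p).1 in let j := (val p).2 in
     if ((i, j) == (a, b)) || ((i, j) == (b, c)) || ((i, j) == (c, a)) then x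
     else if ((j, i) == (a, b)) || ((j, i) == (b, c)) || ((j, i) == (c, a))
     then - x else 0].

Definition is_three_cycle (R : realFieldType) (n : nat) (g : Graph R n) (x : R)
  : Prop :=
  exists a b c : 'I_n, [/\ a != b, b != c, a != c & g = three_cycle a b c x].

Definition has_arc (R : realFieldType) (n : nat) (g : Graph R n) (u v : 'I_n)
  : Prop := u != v /\ wt g u v != 0.

(* Each three-cycle is orthogonal to every strongly transitive graph, since its
   inner product with one is d_ab + d_bc + d_ca = 0, so the span W of CB lies in
   C^n_A.  The private arcs make CB linearly independent (read off the private
   coordinate of a vanishing combination), so dim W = (n-1 choose 2).  The
   potential graphs d_ij = f_j - f_i are strongly transitive and span a space S
   of dimension n - 1 orthogonal to W; as (n-1 choose 2) + (n-1) = (n choose 2),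
   W + S is everything, and a graph orthogonal to S has zero S-component. *)
From HB Require Import structures.
From mathcomp Require Import all_boot all_order all_algebra.
Import Order.TTheory GRing.Theory Num.Theory.
Local Open Scope ring_scope.
Set Implicit Arguments. Unset Strict Implicit.

Lemma card_Pairs n : #|{: Pairs n}| = 'C(n, 2).
Proof.
rewrite card_sig -sum1_card.
rewrite -(pair_big_dep xpredT (fun i j : 'I_n => (i < j)%N) (fun _ _ => 1%N)) /=.
rewrite (exchange_big_dep xpredT) //= -bin2_sum big_mkord.
apply: eq_bigr => j _.
have := big_ord_widen_cond (op := addn) (idx := 0%N) n xpredT (fun=> 1%N)
  (ltnW (ltn_ord j)).
rewrite /= sum1_card card_ord => widen_j.
by rewrite [in RHS]widen_j; apply: eq_bigl.
Qed.

Lemma dim_Graph (R : realFieldType) n : \dim (fullv : {vspace Graph R n}) = 'C(n, 2).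
Proof. by rewrite dimvf /dim /= muln1 card_Pairs. Qed.

Section Graphs.
Variables (R : realFieldType) (n : nat).
Implicit Types (g h s : Graph R n) (i j k : 'I_n).

Lemma wt_lt g i j (lt_ij : (i < j)%N) : wt g i j = g (Sub (i, j) lt_ij).
Proof. by rewrite /wt insubT. Qed.

Lemma wt_gt g i j (lt_ji : (j < i)%N) : wt g i j = - g (Sub (j, i) lt_ji).
Proof. by rewrite /wt insubF ?insubT //= ltnNge ltnW. Qed.

Lemma wt_diag g i : wt g i i = 0.
Proof. by rewrite /wt !insubF //= ltnn. Qed.

Lemma wtN g i j : wt g i j = - wt g j i.
Proof.
case: (ltngtP i j) => [lt_ij | lt_ji | /val_inj->].
- by rewrite (wt_lt g lt_ij) (wt_gt g lt_ij) opprK.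
- by rewrite (wt_lt g lt_ji) (wt_gt g lt_ji).
- by rewrite wt_diag oppr0.
Qed.

Lemma wtP (a : R) g h i j : wt (a *: g + h) i j = a * wt g i j + wt h i j.
Proof.
case: (ltngtP i j) => [lt_ij | lt_ji | /val_inj->].
- by rewrite !(wt_lt _ lt_ij) !ffunE.
- by rewrite !(wt_gt _ lt_ji) !ffunE /= opprD mulrN.
- by rewrite !wt_diag mulr0 addr0.
Qed.

Lemma wt0 i j : wt (0 : Graph R n) i j = 0.
Proof.
case: (ltngtP i j) => [lt_ij | lt_ji | /val_inj->].
- by rewrite (wt_lt _ lt_ij) ffunE.
- by rewrite (wt_gt _ lt_ji) ffunE oppr0.
- by rewrite wt_diag.
Qed.

Lemma innerPl (a : R) g h s : inner (a *: g + h) s = a * inner g s + inner h s.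
Proof.
rewrite /inner mulr_sumr -big_split /=; apply: eq_bigr => p _.
by rewrite !ffunE /= mulrDl mulrA.
Qed.

Lemma innerDl g h s : inner (g + h) s = inner g s + inner h s.
Proof. by rewrite /inner -big_split; apply: eq_bigr => p _; rewrite ffunE mulrDl. Qed.

Lemma inner0l s : inner 0 s = 0.
Proof. by rewrite /inner big1 // => p _; rewrite ffunE mul0r. Qed.

Lemma inner_self_eq0 g : inner g g = 0 -> g = 0.
Proof.
move=> gg0; apply/ffunP => p; rewrite ffunE.
have /(_ p isT)/eqP := psumr_eq0P (fun p _ => sqr_ge0 (g p)) gg0.
by rewrite mulf_eq0 orbb => /eqP.
Qed.

Lemma span_ind (X : seq (Graph R n)) (P : Graph R n -> Prop) :
  P 0 -> (forall a u v, P u -> P v -> P (a *: u + v)) ->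
  (forall x, x \in X -> P x) -> forall v, v \in <<X>>%VS -> P v.
Proof.
move=> P0 PD PX v /(@coord_span _ _ _ (in_tuple X)) ->.
elim/big_rec: _ => // i x _ Px; apply: PD => //.
exact/PX/mem_nth.
Qed.

Lemma strongly_transitive0 : strongly_transitive (0 : Graph R n).
Proof. by move=> i j k _ _ _; rewrite !wt0 addr0. Qed.

Lemma strongly_transitiveP a g h :
  strongly_transitive g -> strongly_transitive h ->
  strongly_transitive (a *: g + h).
Proof.
move=> stg sth i j k ij jk ik.
by rewrite !wtP addrACA -mulrDr stg // sth.
Qed.

Lemma in_C0 : in_C (0 : Graph R n).
Proof. by move=> s _; rewrite inner0l. Qed.

Lemma in_CP a g h : in_C g -> in_C h -> in_C (a *: g + h).
Proof. by move=> Cg Ch s sts; rewrite innerPl Cg // Ch // mulr0 addr0. Qed.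

Definition arc_graph (x y : 'I_n) : Graph R n :=
  [ffun p : Pairs n =>
     if val p == (x, y) then 1 else if val p == (y, x) then -1 else 0].

Lemma inner_arc_graph (x y : 'I_n) s : x != y -> inner (arc_graph x y) s = wt s x y.
Proof.
move=> xy; rewrite /inner.
case: (ltngtP x y) => [lt_xy | lt_yx | /val_inj exy]; last by rewrite exy eqxx in xy.
- rewrite (bigD1 (Sub (x, y) lt_xy)) //= big1 ?addr0.
    by rewrite ffunE /= eqxx mul1r (wt_lt _ lt_xy).
  case=> [[i j] /= lt_ij] neq_p; rewrite ffunE /=.
  case: eqP => [[ei ej] | _].
    by subst; rewrite (bool_irrelevance lt_ij lt_xy) eqxx in neq_p.
  case: eqP => [[ei ej] | _]; last by rewrite mul0r.
  by subst; have := ltn_trans lt_xy lt_ij; rewrite ltnn.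
- rewrite (bigD1 (Sub (y, x) lt_yx)) //= big1 ?addr0.
    rewrite ffunE /= eqxx (wt_gt _ lt_yx) ifN ?mulN1r //.
    by apply: contraNneq xy => -[->].
  case=> [[i j] /= lt_ij] neq_p; rewrite ffunE /=.
  case: eqP => [[ei ej] | _].
    by subst; have := ltn_trans lt_yx lt_ij; rewrite ltnn.
  case: eqP => [[ei ej] | _]; last by rewrite mul0r.
  by subst; rewrite (bool_irrelevance lt_ij lt_yx) eqxx in neq_p.
Qed.

Lemma three_cycleE (a b c : 'I_n) : a != b -> b != c -> a != c ->
  three_cycle a b c 1 = arc_graph a b + arc_graph b c + arc_graph c a.
Proof.
move=> ab bc ac; apply/ffunP => -[[i j] /= lt_ij]; rewrite !ffunE /= !xpair_eqE.
move: (negbTE ab) (negbTE bc) (negbTE ac).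
rewrite eq_sym [b == c]eq_sym [a == c]eq_sym => ba cb ca.
move: (negbTE ab) (negbTE bc) (negbTE ac) => ab' bc' ac'.
case: (eqVneq i a) => [?|/negbTE ?]; case: (eqVneq i b) => [?|/negbTE ?];
case: (eqVneq i c) => [?|/negbTE ?]; case: (eqVneq j a) => [?|/negbTE ?];
case: (eqVneq j b) => [?|/negbTE ?]; case: (eqVneq j c) => [?|/negbTE ?];
subst; rewrite ?eqxx;
repeat match goal with H : (_ == _) = false |- _ => progress rewrite H end;
rewrite /= ?addr0 ?add0r //;
match goal with H : (?x == ?x) = false |- _ => by rewrite eqxx in H end.
Qed.

Lemma three_cycle_in_C (a b c : 'I_n) : a != b -> b != c -> a != c ->
  in_C (three_cycle a b c (1 : R)).
Proof.
move=> ab bc ac s sts; have ca : c != a by rewrite eq_sym.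
by rewrite three_cycleE // !innerDl !inner_arc_graph // sts // [wt s c a]wtN subrr.
Qed.

Lemma wt_coord (u v : 'I_n) : u != v ->
  exists p : Pairs n, forall g, (wt g u v == 0) = (g p == 0).
Proof.
move=> uv; case: (ltngtP u v) => [lt_uv | lt_vu | /val_inj euv].
- by exists (Sub (u, v) lt_uv) => g; rewrite (wt_lt _ lt_uv).
- by exists (Sub (v, u) lt_vu) => g; rewrite (wt_gt _ lt_vu) oppr_eq0.
- by rewrite euv eqxx in uv.
Qed.

Lemma free_private_arcs (X : seq (Graph R n)) : uniq X ->
  (forall g, g \in X -> exists u v : 'I_n,
      has_arc g u v /\ (forall h, h \in X -> h != g -> ~ has_arc h u v)) ->
  free X.
Proof.
move=> uniqX priv; apply/(@freeP _ _ _ (in_tuple X)) => k sum0 i.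
have [u [v [[uv gi_uv] private_uv]]] := priv _ (mem_nth 0 (ltn_ord i)).
have [p wt_p] := wt_coord uv.
have := congr1 (fun f : Graph R n => f p) sum0.
rewrite sum_ffunE ffunE (bigD1 i) //= big1 ?addr0.
  by move/eqP; rewrite ffunE scaler_eq0 -wt_p (negbTE gi_uv) orbF => /eqP.
move=> j ji; rewrite ffunE.
have Xj_uv : wt X`_j u v == 0.
  apply/negPn/negP => nz; apply: (private_uv X`_j) => //.
    exact: mem_nth.
  by rewrite nth_uniq.
by move: Xj_uv; rewrite wt_p => /eqP ->; rewrite scaler0.
Qed.

Lemma orthogonal_sum_full (W S : {vspace Graph R n}) :
  (forall w s, w \in W -> s \in S -> inner w s = 0) ->
  (\dim W + \dim S)%N = 'C(n, 2) ->
  forall g, (forall s, s \in S -> inner g s = 0) -> g \in W.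
Proof.
move=> WS dimWS g gS.
have capWS : (W :&: S = 0)%VS.
  apply/eqP; rewrite -subv0; apply/subvP => x /memv_capP[xW xS].
  by rewrite memv0; apply/eqP/inner_self_eq0/WS.
have fullWS : (W + S)%VS = fullv.
  by apply/eqP; rewrite eqEdim subvf /= dimv_disjoint_sum // dimWS dim_Graph.
have /memv_addP[w wW [s sS gE]] : g \in (W + S)%VS by rewrite fullWS memvf.
have /inner_self_eq0 s0 : inner s s = 0.
  by rewrite -(gS s sS) gE innerDl (WS w s) // add0r.
by rewrite gE s0 addr0.
Qed.

End Graphs.

Section Potentials.
Variables (R : realFieldType) (m : nat).

Definition potential_graph (f : 'I_m.+1 -> R) : Graph R m.+1 :=
  [ffun p : Pairs m.+1 => f (val p).2 - f (val p).1].

Lemma wt_potential_graph f (i j : 'I_m.+1) : wt (potential_graph f) i j = f j - f i.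
Proof.
case: (ltngtP i j) => [lt_ij | lt_ji | /val_inj->].
- by rewrite (wt_lt _ lt_ij) ffunE.
- by rewrite (wt_gt _ lt_ji) ffunE opprB.
- by rewrite wt_diag subrr.
Qed.

Lemma potential_graph_strongly_transitive f :
  strongly_transitive (potential_graph f).
Proof. by move=> i j k _ _ _; rewrite !wt_potential_graph addrC addrA subrK. Qed.

(* V_0 is omitted: the potential of its indicator is minus the sum of the others. *)
Definition potential_basis : m.-tuple (Graph R m.+1) :=
  [tuple potential_graph (fun j => (j == lift ord0 k)%:R) | k < m].

Lemma free_potential_basis : free potential_basis.
Proof.
apply/freeP => c sum0 k.
have lt0k : ((ord0 : 'I_m.+1) < lift ord0 k)%N by [].
have := congr1 (fun f : Graph R m.+1 => f (Sub (ord0, lift ord0 k) lt0k)) sum0.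
rewrite sum_ffunE ffunE (bigD1 k) //= big1 ?addr0.
  rewrite ffunE (nth_map k) ?size_enum_ord // nth_ord_enum !ffunE /= eqxx subr0.
  by move/eqP; rewrite scaler_eq0 oner_eq0 orbF => /eqP.
move=> j jk; rewrite ffunE (nth_map k) ?size_enum_ord // nth_ord_enum !ffunE /=.
by rewrite (inj_eq lift_inj) eq_sym (negbTE jk) subr0 scaler0.
Qed.

Lemma span_potential_basis_strongly_transitive s :
  s \in <<potential_basis>>%VS -> strongly_transitive s.
Proof.
move: s; apply: span_ind; [exact: strongly_transitive0 | exact: strongly_transitiveP |].
by move=> x /mapP[k _ ->]; exact: potential_graph_strongly_transitive.
Qed.

End Potentials.

Unset Implicit Arguments.

Theorem corollary2 (R : realFieldType) (n : nat) (CB : seq (Graph R n)) :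
  (3 <= n)%N ->
  uniq CB ->
  size CB = 'C(n.-1, 2) ->
  (forall g, g \in CB -> is_three_cycle g 1) ->
  (forall g, g \in CB -> exists u v : 'I_n,
      has_arc g u v /\ (forall h, h \in CB -> h != g -> ~ has_arc h u v)) ->
  free CB /\ (forall g : Graph R n, g \in <<CB>>%VS <-> in_C g).
Proof.
case: n CB => [//|m] CB _ uniqCB sizeCB cycles priv.
have freeCB := free_private_arcs uniqCB priv.
have spanC : forall g, g \in <<CB>>%VS -> in_C g.
  apply: span_ind; [exact: in_C0 | exact: in_CP |].
  by move=> x /cycles [a [b [c [ab bc ac ->]]]]; exact: three_cycle_in_C.
have ST := @span_potential_basis_strongly_transitive R m.
split=> // g; split=> [/spanC // | Cg].
apply: (orthogonal_sum_full (S := <<potential_basis R m>>%VS)) => [w s wW sS||s sS].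
- exact/spanC/ST.
- rewrite (eqP freeCB) (eqP (free_potential_basis R m)) sizeCB size_tuple.
  by rewrite binS bin1 addnC.
- exact/Cg/ST.
Qed.
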